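(* Let $K$ be a field, $\mathcal A$ a $K$-algebra, $\vartheta$ any one of the four types (left, right, pre-two-sided, two-sided), and $M$ a $\vartheta$-Mathieu subspace of $\mathcal A$ such that every element of $\sqrt M$ is algebraic over $K$. Let $V$ be a $K$-subspace of $M$ with $I_M\subseteq V$. Then $V$ is a $\vartheta$-Mathieu subspace of $\mathcal A$ and $\sqrt V=\sqrt{I_M}$.
   Context: All algebras are associative and unital. $\sqrt S$ is the set of $a\in\mathcal A$ with $a^m\in S$ for all sufficiently large $m$. For $\vartheta\neq$ pre-two-sided, $I_M$ is the largest $\vartheta$-ideal of $\mathcal A$ contained in $M$ (the sum of all of them), where a $\vartheta$-ideal is a left ideal if $\vartheta$ = left, right ideal if right, two-sided ideal if two-sided; for $\vartheta$ = pre-two-sided, $I_M$ is the sum of the largest left ideal contained in $M$ and the largest right ideal contained in $M$. A $K$-subspace $V$ is a left (resp. right) Mathieu subspace if whenever $a^m\in V$ for all $m\ge1$, then for every $b\in\mathcal A$, $ba^m\in V$ (resp. $a^mb\in V$) for all sufficiently large $m$; pre-two-sided if both left and right; two-sided if whenever $a^m\in V$ for all $m\ge1$, then for all $b,c$, $ba^mc\in V$ for all sufficiently large $m$. *)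

From HB Require Import structures.
From mathcomp Require Import all_boot all_order all_algebra.
Set Implicit Arguments. Unset Strict Implicit. Unset Printing Implicit Defensive.
Import GRing.Theory.
Local Open Scope ring_scope.

Inductive mtype := MLeft | MRight | MPreTwo | MTwo.

Section Defs.
Variables (K : fieldType) (A : algType K).

Definition is_subspace (V : A -> Prop) : Prop :=
  V 0 /\ forall (k : K) (u v : A), V u -> V v -> V (k *: u + v).

Definition sqrt_set (S : A -> Prop) : A -> Prop :=
  fun a => exists N : nat, forall m : nat, (N <= m)%N -> S (a ^+ m).

Definition algebraic (a : A) : Prop :=
  exists p : {poly K}, p != 0 /\ horner_alg a p = 0.

Definition all_powers_in (V : A -> Prop) (a : A) : Prop :=
  forall m : nat, (1 <= m)%N -> V (a ^+ m).

Definition left_mathieu_prop (V : A -> Prop) : Prop :=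
  forall a, all_powers_in V a ->
  forall b, exists N : nat, forall m : nat, (N <= m)%N -> V (b * a ^+ m).

Definition right_mathieu_prop (V : A -> Prop) : Prop :=
  forall a, all_powers_in V a ->
  forall b, exists N : nat, forall m : nat, (N <= m)%N -> V (a ^+ m * b).

Definition two_mathieu_prop (V : A -> Prop) : Prop :=
  forall a, all_powers_in V a ->
  forall b c, exists N : nat, forall m : nat, (N <= m)%N -> V (b * a ^+ m * c).

Definition is_mathieu (t : mtype) (V : A -> Prop) : Prop :=
  is_subspace V /\
  match t with
  | MLeft => left_mathieu_prop V
  | MRight => right_mathieu_prop V
  | MPreTwo => left_mathieu_prop V /\ right_mathieu_prop V
  | MTwo => two_mathieu_prop V
  end.

Definition is_left_ideal (J : A -> Prop) : Prop :=
  is_subspace J /\ forall b x, J x -> J (b * x).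
Definition is_right_ideal (J : A -> Prop) : Prop :=
  is_subspace J /\ forall b x, J x -> J (x * b).
Definition is_two_ideal (J : A -> Prop) : Prop :=
  is_subspace J /\ forall b c x, J x -> J (b * x * c).

(* The sum of all ideals (of a given kind P) contained in M:
   finite sums of elements each lying in some such ideal. *)
Definition sum_ideals_in (P : (A -> Prop) -> Prop) (M : A -> Prop) : A -> Prop :=
  fun a => exists s : seq A,
    (forall x, x \in s -> exists J : A -> Prop, P J /\ (forall y, J y -> M y) /\ J x)
    /\ a = \sum_(x <- s) x.

Definition I_of (t : mtype) (M : A -> Prop) : A -> Prop :=
  match t with
  | MLeft => sum_ideals_in is_left_ideal M
  | MRight => sum_ideals_in is_right_ideal M
  | MTwo => sum_ideals_in is_two_ideal M
  | MPreTwo => fun a => exists b c,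
      sum_ideals_in is_left_ideal M b /\ sum_ideals_in is_right_ideal M c /\ a = b + c
  end.

End Defs.

From HB Require Import structures.
From mathcomp Require Import all_boot all_order all_algebra.
From mathcomp Require Import ring.

Set Implicit Arguments.
Unset Strict Implicit.
Unset Printing Implicit Defensive.
Import GRing.Theory.
Local Open Scope ring_scope.

(* An algebraic element a satisfies a relation a^r = a^(r+1) s with s a
   polynomial in a (divide its minimal relation by the largest power of X).
   Then e = a^r s^r is an idempotent with a^m e = e a^m = a^m for m >= r, and
   e is a combination of arbitrarily high powers of a, so e lies in M whenever
   a lies in sqrt M.  An idempotent of a Mathieu subspace M generates a
   one-sided (or two-sided) ideal contained in M, hence in I_M; since a^m is a
   multiple of e, all the relevant multiples of a^m lie in I_M, which gives
   both the Mathieu property of every V between I_M and M and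
   sqrt V = sqrt I_M. *)

Section AlgebraicIdempotent.
Variables (K : fieldType) (A : algType K) (a : A).
Local Notation h := (horner_alg a).

Lemma horner_alg_Xn m : h 'X^m = a ^+ m.
Proof. by rewrite rmorphXn /= horner_algX. Qed.

Lemma horner_alg_comm (p q : {poly K}) : h p * h q = h q * h p.
Proof. by rewrite -!rmorphM mulrC. Qed.

Lemma horner_alg_Xn_mul_in (M : A -> Prop) N : is_subspace M ->
  (forall j, (N <= j)%N -> M (a ^+ j)) -> forall g, M (h ('X^N * g)).
Proof.
move=> [M0 MD] + g; elim/poly_ind: g N => [|g c IH] N HN.
  by rewrite mulr0 rmorph0.
have -> : 'X^N * (g * 'X + c%:P) = c *: 'X^N + 'X^(N.+1) * g :> {poly K}.
  by rewrite -mul_polyC exprS; ring.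
rewrite -mul_polyC rmorphD rmorphM /= horner_algC mulr_algl horner_alg_Xn.
apply: MD; first exact: HN.
by apply: IH => j /ltnW; apply: HN.
Qed.

Lemma horner_alg_Xn_stable (p : {poly K}) k : p != 0 -> h (p * 'X^k) = 0 ->
  exists r (q : {poly K}), h 'X^r = h ('X^(r.+1) * q).
Proof.
elim/poly_ind: p k => [|p c IH] k; first by rewrite eqxx.
have [-> | c_neq0] := eqVneq c 0 => [|_ hp0].
  rewrite addr0 => pX_neq0 hp0.
  have p_neq0 : p != 0 by apply: contraNneq pX_neq0 => ->; rewrite mul0r.
  by apply: (IH k.+1 p_neq0); rewrite exprS mulrA.
exists k, (- c^-1%:P * p).
have -> : 'X^k = c^-1%:P * ((p * 'X + c%:P) * 'X^k) + 'X^(k.+1) * (- c^-1%:P * p).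
  have cVc : c^-1%:P * c%:P = 1 :> {poly K} by rewrite -polyCM mulVf.
  by rewrite -{1}(mul1r 'X^k) -cVc exprS; ring.
by rewrite rmorphD rmorphM /= hp0 mulr0 add0r.
Qed.

Lemma algebraic_Xn_stable : algebraic a ->
  exists r (q : {poly K}), h 'X^r = h ('X^(r.+1) * q).
Proof.
by move=> [p [p_neq0 hp0]]; apply: (horner_alg_Xn_stable (k := 0) p_neq0); rewrite mulr1.
Qed.

Section Stable.
Variables (r : nat) (q : {poly K}).
Hypothesis stable : h 'X^r = h ('X^(r.+1) * q).

Lemma horner_alg_Xn_shift k g : h ('X^r * g) = h ('X^(r + k) * q ^+ k * g).
Proof.
elim: k g => [|k IH] g; first by rewrite addn0 expr0 mulr1.
rewrite IH [in RHS]addnS !exprS exprD.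
have -> : 'X^r * 'X^k * q ^+ k * g = 'X^r * ('X^k * q ^+ k * g) :> {poly K} by ring.
have -> : 'X * ('X^r * 'X^k) * (q * q ^+ k) * g
          = 'X^(r.+1) * q * ('X^k * q ^+ k * g) :> {poly K} by rewrite exprS; ring.
by rewrite !rmorphM /= stable rmorphM.
Qed.

Let e := h ('X^r * q ^+ r).

Lemma stable_idem : e * e = e.
Proof.
rewrite /e -rmorphM [RHS](horner_alg_Xn_shift r (q ^+ r)) exprD; congr (h _); ring.
Qed.

Lemma stable_absorbs m : (r <= m)%N -> a ^+ m * e = a ^+ m /\ e * a ^+ m = a ^+ m.
Proof.
move=> le_rm; suff am_e : a ^+ m * e = a ^+ m.
  by split => //; rewrite -horner_alg_Xn horner_alg_comm horner_alg_Xn.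
rewrite -(subnKC le_rm) -!horner_alg_Xn -rmorphM exprD (horner_alg_Xn_shift r).
by congr (h _); rewrite exprD; ring.
Qed.

Lemma stable_idem_in (M : A -> Prop) N : is_subspace M ->
  (forall j, (N <= j)%N -> M (a ^+ j)) -> M e.
Proof.
move=> MS HN; rewrite /e (horner_alg_Xn_shift N (q ^+ r)).
have -> : 'X^(r + N) * q ^+ N * q ^+ r = 'X^N * ('X^r * q ^+ N * q ^+ r) :> {poly K}.
  by rewrite exprD; ring.
exact: horner_alg_Xn_mul_in.
Qed.

End Stable.

Lemma algebraic_power_idempotent (M : A -> Prop) N : is_subspace M -> algebraic a ->
  (forall j, (N <= j)%N -> M (a ^+ j)) ->
  exists e r, [/\ e * e = e, M e &
    forall m, (r <= m)%N -> a ^+ m * e = a ^+ m /\ e * a ^+ m = a ^+ m].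
Proof.
move=> MS /algebraic_Xn_stable [r [q stable]] HN.
exists (h ('X^r * q ^+ r)), r; split.
- exact: stable_idem.
- exact: stable_idem_in HN.
- exact: stable_absorbs.
Qed.

End AlgebraicIdempotent.

Section IdempotentIdeals.
Variables (K : fieldType) (A : algType K).
Implicit Types (M : A -> Prop) (e : A).

Lemma expr_idem e m : e * e = e -> (0 < m)%N -> e ^+ m = e.
Proof. by move=> ee; case: m => // m _; elim: m => // m IH; rewrite exprS IH. Qed.

Lemma idem_all_powers_in M e : e * e = e -> M e -> all_powers_in M e.
Proof. by move=> ee Me m m_gt0; rewrite expr_idem. Qed.

Lemma left_mathieu_idem M e : left_mathieu_prop M -> e * e = e -> M e ->
  forall b, M (b * e).
Proof.
move=> MP ee Me b; have [N HN] := MP e (idem_all_powers_in ee Me) b.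
by have := HN N.+1 (leqnSn N); rewrite expr_idem.
Qed.

Lemma right_mathieu_idem M e : right_mathieu_prop M -> e * e = e -> M e ->
  forall b, M (e * b).
Proof.
move=> MP ee Me b; have [N HN] := MP e (idem_all_powers_in ee Me) b.
by have := HN N.+1 (leqnSn N); rewrite expr_idem.
Qed.

Lemma two_mathieu_idem M e : two_mathieu_prop M -> e * e = e -> M e ->
  forall b c, M (b * e * c).
Proof.
move=> MP ee Me b c; have [N HN] := MP e (idem_all_powers_in ee Me) b c.
by have := HN N.+1 (leqnSn N); rewrite expr_idem.
Qed.

Lemma sum_ideals_in0 (P : (A -> Prop) -> Prop) M : sum_ideals_in P M 0.
Proof. by exists [::]; rewrite big_nil. Qed.

Lemma sum_ideals_in_mem (P : (A -> Prop) -> Prop) M (J : A -> Prop) x :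
  P J -> (forall y, J y -> M y) -> J x -> sum_ideals_in P M x.
Proof.
move=> PJ JM Jx; exists [:: x]; rewrite big_seq1; split => // y.
by rewrite mem_seq1 => /eqP ->; exists J.
Qed.

Lemma is_left_ideal_mulr e : is_left_ideal (fun y => exists c, y = c * e).
Proof.
split; first split; first by exists 0; rewrite mul0r.
  by move=> k _ _ [c ->] [d ->]; exists (k *: c + d); rewrite mulrDl scalerAl.
by move=> b _ [c ->]; exists (b * c); rewrite mulrA.
Qed.

Lemma is_right_ideal_mull e : is_right_ideal (fun y => exists c, y = e * c).
Proof.
split; first split; first by exists 0; rewrite mulr0.
  by move=> k _ _ [c ->] [d ->]; exists (k *: c + d); rewrite mulrDr scalerAr.
by move=> b _ [c ->]; exists (c * b); rewrite mulrA.
Qed.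

Definition two_sided_span e : A -> Prop :=
  fun y => exists s : seq (A * A), y = \sum_(u <- s) u.1 * e * u.2.

Lemma is_two_ideal_span e : is_two_ideal (two_sided_span e).
Proof.
split; first split; first by exists [::]; rewrite big_nil.
  move=> k _ _ [s1 ->] [s2 ->]; exists (map (fun u => (k *: u.1, u.2)) s1 ++ s2).
  rewrite big_cat big_map scaler_sumr; congr (_ + _).
  by apply: eq_bigr => u _; rewrite -!scalerAl.
move=> b c _ [s ->]; exists (map (fun u => (b * u.1, u.2 * c)) s).
by rewrite big_map mulr_sumr mulr_suml; apply: eq_bigr => u _; rewrite !mulrA.
Qed.

Lemma two_sided_span_sub M e : is_subspace M -> (forall b c, M (b * e * c)) ->
  forall y, two_sided_span e y -> M y.
Proof.
move=> [M0 MD] Mbec _ [s ->]; elim: s => [|u s IH]; first by rewrite big_nil.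
by rewrite big_cons -[X in M (X + _)]scale1r; apply: MD.
Qed.

Lemma left_mathieu_idem_ideal M e : left_mathieu_prop M -> e * e = e -> M e ->
  forall b, sum_ideals_in (@is_left_ideal K A) M (b * e).
Proof.
move=> MP ee Me b; apply: sum_ideals_in_mem (is_left_ideal_mulr e) _ _.
  by move=> _ [c ->]; apply: left_mathieu_idem.
by exists b.
Qed.

Lemma right_mathieu_idem_ideal M e : right_mathieu_prop M -> e * e = e -> M e ->
  forall b, sum_ideals_in (@is_right_ideal K A) M (e * b).
Proof.
move=> MP ee Me b; apply: sum_ideals_in_mem (is_right_ideal_mull e) _ _.
  by move=> _ [c ->]; apply: right_mathieu_idem.
by exists b.
Qed.

Lemma two_mathieu_idem_ideal M e : is_subspace M -> two_mathieu_prop M ->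
  e * e = e -> M e -> forall b c, sum_ideals_in (@is_two_ideal K A) M (b * e * c).
Proof.
move=> MS MP ee Me b c; apply: sum_ideals_in_mem (is_two_ideal_span e) _ _.
  by apply: two_sided_span_sub => // ??; apply: two_mathieu_idem.
by exists [:: (b, c)]; rewrite big_seq1.
Qed.

End IdempotentIdeals.

Section Absorbing.
Variables (K : fieldType) (A : algType K).

Definition absorbs (t : mtype) (I : A -> Prop) (x : A) : Prop :=
  match t with
  | MLeft => forall b, I (b * x)
  | MRight => forall b, I (x * b)
  | MPreTwo => (forall b, I (b * x)) /\ (forall b, I (x * b))
  | MTwo => forall b c, I (b * x * c)
  end.

Lemma absorbs_mem t I x : absorbs t I x -> I x.
Proof.
case: t => /=.
- by move/(_ 1); rewrite mul1r.
- by move/(_ 1); rewrite mulr1.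
- by case=> /(_ 1); rewrite mul1r.
- by move/(_ 1 1); rewrite mul1r mulr1.
Qed.

Lemma absorbs_sub t (I J : A -> Prop) x :
  (forall y, I y -> J y) -> absorbs t I x -> absorbs t J x.
Proof. by move=> IJ; case: t => /=; [| | case=> Il Ir; split |] => *; apply: IJ. Qed.

Lemma is_mathieu_of_absorbs t V : is_subspace V ->
  (forall a, all_powers_in V a ->
     exists r, forall m, (r <= m)%N -> absorbs t V (a ^+ m)) ->
  is_mathieu t V.
Proof.
move=> VS Vabs; split => //.
case: t Vabs => /= Vabs; try split; move=> a /Vabs [r Hr] *; exists r => m /Hr //.
- by move=> [].
- by move=> [].
Qed.

Lemma absorbs_I_of_idem t M e x : is_mathieu t M -> e * e = e -> M e ->
  x * e = x -> e * x = x -> absorbs t (I_of t M) x.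
Proof.
case: t => -[MS MP] ee Me xe ex /=.
- by move=> b; rewrite -xe mulrA; apply: left_mathieu_idem_ideal.
- by move=> b; rewrite -ex -mulrA; apply: right_mathieu_idem_ideal.
- case: MP => ML MR; split=> b.
    exists (b * x), 0; rewrite addr0; split; last by split; first exact: sum_ideals_in0.
    by rewrite -xe mulrA; apply: left_mathieu_idem_ideal.
  exists 0, (x * b); rewrite add0r; split; first exact: sum_ideals_in0.
  by split=> //; rewrite -ex -mulrA; apply: right_mathieu_idem_ideal.
- by move=> b c; rewrite -xe mulrA; apply: two_mathieu_idem_ideal.
Qed.

Lemma sqrt_mathieu_absorbs t M a : is_mathieu t M -> algebraic a -> sqrt_set M a ->
  exists r, forall m, (r <= m)%N -> absorbs t (I_of t M) (a ^+ m).
Proof.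
move=> MM alg [N HN].
have [e [r [ee Me ae]]] := algebraic_power_idempotent MM.1 alg HN.
by exists r => m /ae [xe ex]; apply: absorbs_I_of_idem xe ex.
Qed.

End Absorbing.

Theorem theorem4p10 (K : fieldType) (A : algType K) (t : mtype)
  (M V : A -> Prop) :
  is_mathieu t M ->
  (forall a, sqrt_set M a -> algebraic a) ->
  is_subspace V ->
  (forall a, V a -> M a) ->
  (forall a, I_of t M a -> V a) ->
  is_mathieu t V /\ (forall a, sqrt_set V a <-> sqrt_set (I_of t M) a).
Proof.
move=> MM alg VS VM IV.
have absorbs_pow a : sqrt_set M a ->
    exists r, forall m, (r <= m)%N -> absorbs t (I_of t M) (a ^+ m).
  by move=> Ma; apply: sqrt_mathieu_absorbs (alg a Ma) Ma.
split.
  apply: is_mathieu_of_absorbs => // a Va.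
  have [r Hr] := absorbs_pow a (ex_intro _ 1%N (fun m m_ge1 => VM _ (Va m m_ge1))).
  by exists r => m /Hr; apply: absorbs_sub.
move=> a; split=> -[N HN]; last by exists N => m /HN /IV.
have [r Hr] := absorbs_pow a (ex_intro _ N (fun m le_Nm => VM _ (HN m le_Nm))).
by exists r => m /Hr /absorbs_mem.
Qed.
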